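(* Let $Y$ be a strongly connected finite digraph on which a finite abelian group $G$ acts by automorphisms so that the action on $V_Y$ is free, let $H\le G$, $\Gamma=G/H$, $Z=Y_H$, $X=Y_G$, and let $F$ be an algebraically closed field of characteristic zero. Then $$N_\Gamma(\gamma_{Y/X}(u))=\gamma_{Y/Z}(u)\quad\text{in }F[H][u].$$
   Context: Digraph $Y=(V_Y,E_Y)$ with incidence $e\mapsto(o(e),t(e))$; strongly connected means a directed path exists between any two distinct vertices. For a group $K$ acting on $Y$ by automorphisms, $Y_K$ is the quotient digraph with vertices $K\backslash V_Y$, edges $K\backslash E_Y$ and induced incidence. $\mathcal{A}_Y(w)=\sum_{o(\varepsilon)=w}t(\varepsilon)$ on $\mathbb{Z}V_Y$ is $\mathbb{Z}[K]$-linear, and if $K$ acts freely on $V_Y$ then $\mathbb{Z}V_Y[u]$ is a free $\mathbb{Z}[K][u]$-module of rank $\#V_{Y_K}$. Define $\gamma_{Y/Y_K}(u)=\det_{\mathbb{Z}[K][u]}(\mathcal{I}-\mathcal{A}_Yu)\in\mathbb{Z}[K][u]$ (so $\gamma_{Y/X}$ uses $K=G$ and $\gamma_{Y/Z}$ uses $K=H$). Since $F[G][u]$ is a free $F[H][u]$-module of finite rank, $N_\Gamma:F[G][u]\to F[H][u]$ is defined by $N_\Gamma(P)=\det_{F[H][u]}(m_P)$, $m_P$ the multiplication-by-$P$ map on $F[G][u]$. *)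

From HB Require Import structures.
From mathcomp Require Import all_boot all_order all_algebra all_fingroup.
Set Implicit Arguments. Unset Strict Implicit. Unset Printing Implicit Defensive.
Import GRing.Theory.
Local Open Scope ring_scope.

(* The group ring R[gT] of a finite group gT over a ring R, realised  *)
(* as finitely supported functions gT -> R with convolution product.  *)
Definition galg (R : nzRingType) (gT : finGroupType) := {ffun gT -> R}.

Section GroupAlgebra.
Variables (R : nzRingType) (gT : finGroupType).
Local Notation A := (galg R gT).

HB.instance Definition _ := GRing.Zmodule.on A.

Definition galg_one : A := [ffun x => (x == 1%g)%:R].
Definition galg_mul (f g : A) : A :=
  [ffun x => \sum_(y : gT) f y * g (y^-1 * x)%g].

Lemma galg_mulA : associative galg_mul.
Proof.
move=> f g h; apply/ffunP=> x; rewrite !ffunE.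
under eq_bigr => y _ do rewrite ffunE big_distrr.
under [RHS]eq_bigr => z _ do rewrite ffunE big_distrl.
rewrite [RHS]exchange_big /=; apply: eq_bigr => y _.
rewrite [RHS](reindex_inj (mulgI y)) /=; apply: eq_bigr => w _.
by rewrite mulrA mulKg invMg mulgA.
Qed.

Lemma galg_mul1r : left_id galg_one galg_mul.
Proof.
move=> f; apply/ffunP=> x; rewrite ffunE (bigD1 1%g) //= ffunE eqxx invg1 mul1g mul1r.
rewrite big1 ?addr0 // => y /negPf ny; by rewrite ffunE ny mul0r.
Qed.

Lemma galg_mulr1 : right_id galg_one galg_mul.
Proof.
move=> f; apply/ffunP=> x; rewrite ffunE (bigD1 x) //= ffunE mulVg eqxx mulr1.
rewrite big1 ?addr0 // => y ny; rewrite ffunE.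
suff -> : ((y^-1 * x)%g == 1%g) = false by rewrite mulr0.
apply/negbTE; apply: contra ny => /eqP e.
by rewrite -(mulKVg y x) e mulg1.
Qed.

Lemma galg_mulDl : left_distributive galg_mul +%R.
Proof.
move=> f g h; apply/ffunP=> x; rewrite !ffunE -big_split /=.
by apply: eq_bigr => y _; rewrite ffunE mulrDl.
Qed.

Lemma galg_mulDr : right_distributive galg_mul +%R.
Proof.
move=> f g h; apply/ffunP=> x; rewrite !ffunE -big_split /=.
by apply: eq_bigr => y _; rewrite ffunE mulrDr.
Qed.

Lemma galg_one_neq0 : galg_one != 0.
Proof.
apply/eqP=> /ffunP /(_ 1%g); rewrite !ffunE eqxx => /eqP; by rewrite oner_eq0.
Qed.

HB.instance Definition _ := GRing.Zmodule_isNzRing.Build A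
  galg_mulA galg_mul1r galg_mulr1 galg_mulDl galg_mulDr galg_one_neq0.

Definition galg_delta (g : gT) : A := [ffun x => (x == g)%:R].
(* restriction to a subgroup H: R[gT] -> R[H] (as a subset of R[gT]) *)
Definition galg_res (H : {set gT}) (f : A) : A :=
  [ffun x => if x \in H then f x else 0].
End GroupAlgebra.

Definition galg_map (R S : nzRingType) (gT : finGroupType) (f : R -> S)
  (p : galg R gT) : galg S gT := [ffun x => f (p x)].

(* A digraph is given by finite vertex/edge types V, E and incidence  *)
Definition adj (V E : finType) (o t : E -> V) : rel V :=
  fun a b => [exists e, (o e == a) && (t e == b)].

Definition strongly_connected (V E : finType) (o t : E -> V) : Prop :=
  forall a b : V, a != b -> connect (adj o t) a b.

Section Gamma.
Variables (gT : finGroupType) (V E : finType) (o t : E -> V).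
Variables (toV : {action gT &-> V}).

Definition orbit_rep (K : {set gT}) (v : V) : V :=
  odflt v [pick y in orbit toV K v].
(* the vertex set of the quotient Y_K, as a set of representatives *)
Definition orbit_reps (K : {set gT}) : {set V} := [set orbit_rep K v | v : V].

(* Matrix (over Z[K], seen inside Z[gT]) of A_Y in the basis of        *)
(* orbit representatives r_1..r_n of the free Z[K]-module Z V_Y:       *)
(* A_Y(r_j) = sum_i M_ij r_i,  M_ij = sum_{e, o e = r_j, t e = k.r_i} k *)
Definition adj_galg (R : nzRingType) (K : {set gT}) :
  'M[galg R gT]_#|orbit_reps K| :=
  \matrix_(i, j) [ffun k : gT =>
     (#|[set e : E | (o e == enum_val j) && (t e == toV (enum_val i) k)]|
        * (k \in K))%:R].

Definition gamma (R : nzRingType) (K : {set gT}) : {poly galg R gT} :=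
  \det (\matrix_(i, j) ((i == j)%:R%:P - (adj_galg R K i j)%:P * 'X)).
End Gamma.

(* N_Gamma : F[gT][u] -> F[H][u] : det over F[H][u] of multiplication  *)
(* by P on F[gT][u], in the basis c_1..c_m of coset representatives.    *)
(* P c_j = sum_i c_i a_ij with a_ij = res_H (c_i^-1 P c_j).             *)
Section Norm.
Variables (R : nzRingType) (gT : finGroupType) (H : {group gT}).

Definition coset_rep (g : gT) : gT := odflt g [pick x in (g *: (H : {set gT}))%g].
Definition coset_reps : {set gT} := [set coset_rep g | g : gT].

Definition norm_mx (P : {poly galg R gT}) : 'M[{poly galg R gT}]_#|coset_reps| :=
  \matrix_(i, j) map_poly (fun p => galg_res H
      (galg_delta R (enum_val i)^-1%g * p * galg_delta R (enum_val j))) P.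

Definition NGamma (P : {poly galg R gT}) : {poly galg R gT} := \det (norm_mx P).
End Norm.

(** As G is abelian, R = F[G] is commutative.  For coset
    representatives c_1, ..., c_m of H in G, multiplication by P in R[u] on the
    free F[H][u]-module R[u] has the matrix [coset_mx P] with entries
    res_H (c_k^-1 c_l P); it is a ring morphism, so N_Gamma = det o coset_mx.
    Replacing every entry a of an n x n matrix M over R[u] by the block
    [coset_mx a] gives a matrix whose determinant is det (coset_mx (det M)) as
    soon as M = 1 mod u ([det_expand_mx]).  Finally, if r_1, ..., r_n represent
    the G-orbits of vertices, the vertices r_j c_k represent each H-orbit
    exactly once, and in that basis the matrix of I - A_Y u over F[H][u] is the
    block expansion of the one over R[u], conjugated by a diagonal matrix of
    elements of H. *)

From HB Require Import structures.
From mathcomp Require Import all_boot all_order all_algebra all_fingroup.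
From mathcomp Require Import zify ring.
Set Implicit Arguments. Unset Strict Implicit. Unset Printing Implicit Defensive.
Import GRing.Theory.
Local Open Scope ring_scope.

Section ProductIndex.
Variable m : nat.
Implicit Types p : nat.

Lemma ord_fst_subproof p (x : 'I_(p * m)) : (x %/ m < p)%N.
Proof. by case: m x => [|m'] [x /=]; rewrite ?muln0 // ltn_divLR. Qed.
Lemma ord_snd_subproof p (x : 'I_(p * m)) : (x %% m < m)%N.
Proof. by case: m x => [|m'] [x /=]; rewrite ?muln0 // ltn_pmod. Qed.
Lemma pair_ord_subproof p (i : 'I_p) (k : 'I_m) : (i * m + k < p * m)%N.
Proof. have := ltn_ord i; have := ltn_ord k; nia. Qed.

Definition ord_fst p (x : 'I_(p * m)) : 'I_p := Ordinal (ord_fst_subproof x).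
Definition ord_snd p (x : 'I_(p * m)) : 'I_m := Ordinal (ord_snd_subproof x).
Definition pair_ord p (i : 'I_p) (k : 'I_m) : 'I_(p * m) := Ordinal (pair_ord_subproof i k).

Lemma ord_fst_pair p (i : 'I_p) (k : 'I_m) : ord_fst (pair_ord i k) = i.
Proof.
apply: val_inj => /=; case: m k => [[]//|m' k].
by rewrite divnMDl // divn_small // addn0.
Qed.

Lemma ord_snd_pair p (i : 'I_p) (k : 'I_m) : ord_snd (pair_ord i k) = k.
Proof. by apply: val_inj => /=; rewrite modnMDl modn_small. Qed.

Lemma pair_ord_fst_snd p (x : 'I_(p * m)) : pair_ord (ord_fst x) (ord_snd x) = x.
Proof. by apply: val_inj => /=; rewrite -divn_eq. Qed.

Lemma big_pair_ord p (R : nmodType) (F : 'I_(p * m) -> R) :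
  \sum_x F x = \sum_(i < p) \sum_(k < m) F (pair_ord i k).
Proof.
rewrite pair_big (reindex (fun x : 'I_p * 'I_m => pair_ord x.1 x.2)) //=.
exists (fun x => (ord_fst x, ord_snd x)) => [[i k]|x] _ /=.
  by rewrite ord_fst_pair ord_snd_pair.
by rewrite pair_ord_fst_snd.
Qed.

Lemma ord_fst_lshift p1 p2 (x : 'I_(p1 * m)) :
  ord_fst (cast_ord (esym (mulnDl p1 p2 m)) (lshift (p2 * m) x)) = lshift p2 (ord_fst x).
Proof. exact: val_inj. Qed.

Lemma ord_snd_lshift p1 p2 (x : 'I_(p1 * m)) :
  ord_snd (cast_ord (esym (mulnDl p1 p2 m)) (lshift (p2 * m) x)) = ord_snd x.
Proof. exact: val_inj. Qed.

Lemma ord_fst_rshift p1 p2 (x : 'I_(p2 * m)) :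
  ord_fst (cast_ord (esym (mulnDl p1 p2 m)) (rshift (p1 * m) x)) = rshift p1 (ord_fst x).
Proof.
have /andP[_ m_gt0] : ((0 < p2) && (0 < m))%N.
  by rewrite -muln_gt0; apply: leq_ltn_trans (ltn_ord x).
by apply: val_inj => /=; rewrite divnMDl.
Qed.

Lemma ord_snd_rshift p1 p2 (x : 'I_(p2 * m)) :
  ord_snd (cast_ord (esym (mulnDl p1 p2 m)) (rshift (p1 * m) x)) = ord_snd x.
Proof. by apply: val_inj => /=; rewrite modnMDl. Qed.

End ProductIndex.

Lemma det_castmx (R : comNzRingType) n1 n2 (e : n1 = n2) (M : 'M[R]_n1) :
  \det (castmx (e, e) M) = \det M.
Proof. by case: n2 / e; rewrite castmx_id. Qed.

Lemma det_reindex (R : comNzRingType) p q (f : 'I_p -> 'I_q) :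
  injective f -> p = q -> forall M : 'M[R]_q, \det (\matrix_(i, j) M (f i) (f j)) = \det M.
Proof.
move=> f_inj eq_pq; case: q / eq_pq in f f_inj * => M; pose s := perm f_inj.
have -> : \matrix_(i, j) M (f i) (f j) = row_perm s (col_perm s M).
  by apply/matrixP => i j; rewrite !mxE !permE.
rewrite row_permE col_permE !det_mulmx !det_perm odd_permV.
by rewrite mulrCA -signr_addb addbb expr0 mulr1.
Qed.

Lemma det_scale_row_col (R : comNzRingType) n (u v : 'I_n -> R) (M : 'M[R]_n) :
  \det (\matrix_(i, j) (u i * M i j * v j)) = (\prod_i u i) * (\prod_i v i) * \det M.
Proof.
have -> : \matrix_(i, j) (u i * M i j * v j) = diag_mx (\row_i u i) *m M *m diag_mx (\row_i v i).
  by apply/matrixP => i j; rewrite mul_mx_diag mul_diag_mx !mxE.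
rewrite !det_mulmx !det_diag mulrAC.
by congr (_ * _ * _); apply: eq_bigr => i _; rewrite mxE.
Qed.

Lemma mulmx_schur_block (A : comNzRingType) n (W : 'M[A]_1) (X : 'M_(1, n))
    (Y : 'M_(n, 1)) (Z : 'M_n) :
  block_mx 1%:M 0 (- Y) (W 0 0)%:M *m block_mx W X Y Z
  = block_mx W X 0 (W 0 0 *: Z - Y *m X).
Proof.
rewrite mulmx_block !mul1mx !mul0mx !addr0 !mulNmx !mul_scalar_mx.
have -> : Y *m W = W 0 0 *: Y by rewrite {1}[W]mx11_scalar mul_mx_scalar.
by rewrite addNr addrC.
Qed.

Section BlockExpansion.
Variables (A : comNzRingType) (m : nat) (phi : A -> 'M[A]_m).
Hypothesis phiD : {morph phi : a b / a + b}.
Hypothesis phiM : {morph phi : a b / a * b >-> a *m b}.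
Hypothesis phi1 : phi 1 = 1%:M.

Lemma phi0 : phi 0 = 0.
Proof. by apply: (@addrI _ (phi 0)); rewrite -phiD !addr0. Qed.

Lemma det_phiX a k : \det (phi (a ^+ k)) = \det (phi a) ^+ k.
Proof.
elim: k => [|k IHk]; first by rewrite phi1 det1.
by rewrite !exprS phiM det_mulmx IHk.
Qed.

Definition expand_mx p q (M : 'M[A]_(p, q)) : 'M[A]_(p * m, q * m) :=
  \matrix_(x, y) phi (M (ord_fst x) (ord_fst y)) (ord_snd x) (ord_snd y).

Lemma expand_mxM p q r (P : 'M[A]_(p, q)) (Q : 'M[A]_(q, r)) :
  expand_mx (P *m Q) = expand_mx P *m expand_mx Q.
Proof.
apply/matrixP => x y; rewrite !mxE (big_morph phi phiD phi0) summxE big_pair_ord.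
apply: eq_bigr => i _; rewrite phiM mxE; apply: eq_bigr => k _.
by rewrite !mxE !ord_fst_pair !ord_snd_pair.
Qed.

Lemma expand_mx0 p q : expand_mx (0 : 'M[A]_(p, q)) = 0.
Proof. by apply/matrixP => x y; rewrite !mxE phi0 mxE. Qed.

Lemma expand_block_mx p1 p2 q1 q2 (Aul : 'M[A]_(p1, q1)) (Aur : 'M[A]_(p1, q2))
    (Adl : 'M[A]_(p2, q1)) (Adr : 'M[A]_(p2, q2)) :
  castmx (mulnDl p1 p2 m, mulnDl q1 q2 m) (expand_mx (block_mx Aul Aur Adl Adr)) =
  block_mx (expand_mx Aul) (expand_mx Aur) (expand_mx Adl) (expand_mx Adr).
Proof.
apply/matrixP => x y; rewrite castmxE -[x]splitK -[y]splitK.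
case: (split x) => x'; case: (split y) => y'; rewrite [in LHS]mxE
  ?ord_fst_lshift ?ord_snd_lshift ?ord_fst_rshift ?ord_snd_rshift
  ?block_mxEul ?block_mxEur ?block_mxEdl ?block_mxEdr;
by rewrite [in RHS]mxE.
Qed.

Lemma det_expand_mx11 (W : 'M[A]_1) : \det (expand_mx W) = \det (phi (W 0 0)).
Proof.
rewrite -(det_castmx (mul1n m)); congr (\det _); apply/matrixP => x y.
rewrite castmxE mxE; congr (phi (W _ _) _ _); apply: val_inj => /=;
  by rewrite ?divn_small ?modn_small.
Qed.

Lemma det_expand_ublock n (W : 'M[A]_1) X (Z : 'M[A]_n) :
  \det (expand_mx (block_mx W X 0 Z)) = \det (phi (W 0 0)) * \det (expand_mx Z).
Proof.
by rewrite -(det_castmx (mulnDl 1 n m)) expand_block_mx expand_mx0 det_ublock det_expand_mx11.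
Qed.

Lemma det_expand_lblock n (W : 'M[A]_1) Y (Z : 'M[A]_n) :
  \det (expand_mx (block_mx W 0 Y Z)) = \det (phi (W 0 0)) * \det (expand_mx Z).
Proof.
by rewrite -(det_castmx (mulnDl 1 n m)) expand_block_mx expand_mx0 det_lblock det_expand_mx11.
Qed.

Lemma det_expand_scalar_mx n a : \det (expand_mx (a%:M : 'M[A]_n)) = \det (phi a) ^+ n.
Proof.
elim: n => [|n IHn]; first by rewrite det_mx00.
by rewrite (scalar_mx_block 1 n) det_expand_ublock IHn mxE -exprS.
Qed.

Variable eps : {rmorphism A -> A}.
Hypothesis eps_lreg : forall a, eps a = 1 -> GRing.lreg a.
Hypothesis map_phi_eps : forall a, map_mx eps (phi a) = phi (eps a).

(* Induction via the Schur complement S of the corner entry w.  Instead of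
   dividing by w we multiply by it: eps w = 1 makes det (phi w) ^+ n regular. *)
Lemma det_expand_mx n (M : 'M[A]_n) :
  map_mx eps M = 1%:M -> \det (expand_mx M) = \det (phi (\det M)).
Proof.
elim: n M => [|n IHn] M; first by rewrite !det_mx00 phi1 det1.
have [W [X [Y [Z ->]]]] : exists W X Y Z, M = @block_mx A 1 n 1 n W X Y Z.
  pose M' : 'M[A]_(1 + n) := M.
  by exists (ulsubmx M'), (ursubmx M'), (dlsubmx M'), (drsubmx M'); rewrite submxK.
move=> epsM; have {epsM} : map_mx eps (block_mx W X Y Z) = (1%:M : 'M_(1 + n)) := epsM.
rewrite map_block_mx (scalar_mx_block 1 n) => /eq_block_mx[epsW _ epsY epsZ].
set w := W 0 0; set S := w *: Z - Y *m X.
have eps_w : eps w = 1 by have /matrixP/(_ 0 0) := epsW; rewrite !mxE.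
have eps_S : map_mx eps S = 1%:M.
  apply/matrixP => i j; rewrite !mxE rmorphB rmorphM /= eps_w mul1r rmorph_sum /=.
  rewrite big1 ?subr0 => [|k _]; first by have /matrixP/(_ i j) := epsZ; rewrite !mxE.
  by have /matrixP/(_ i k) := epsY; rewrite rmorphM !mxE => ->; rewrite mul0r.
have schur := mulmx_schur_block W X Y Z.
have det_schur : w ^+ n * \det (block_mx W X Y Z) = w * \det S.
  have := congr1 determinant schur.
  by rewrite det_mulmx det_lblock det_ublock det1 mul1r det_scalar det_mx11.
have d_lreg : GRing.lreg (\det (phi w) ^+ n).
  by apply/lregX/eps_lreg; rewrite -det_map_mx map_phi_eps eps_w phi1 det1.
apply: d_lreg.
have := congr1 (fun N : 'M_(1 + n) => \det (expand_mx N)) schur.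
rewrite expand_mxM det_mulmx.
rewrite det_expand_lblock det_expand_ublock !mxE phi1 det1 mul1r det_expand_scalar_mx.
rewrite (IHn S eps_S) => ->.
by rewrite -det_phiX -!det_mulmx -!phiM det_schur.
Qed.

End BlockExpansion.

Section GroupAlgebra.
Variables (R : nzRingType) (gT : finGroupType).
Implicit Types (f g : galg R gT) (a x : gT).

Lemma galg_addE f g x : (f + g) x = f x + g x.
Proof. by rewrite ffunE. Qed.

Lemma galg_oppE f x : (- f) x = - f x.
Proof. by rewrite ffunE. Qed.

Lemma galg_sumE I (r : seq I) (P : pred I) (F : I -> galg R gT) x :
  (\sum_(i <- r | P i) F i) x = \sum_(i <- r | P i) F i x.
Proof. by elim/big_rec2: _ => [|i y f _ <-]; rewrite ffunE. Qed.

Lemma galg_1E x : (1 : galg R gT) x = (x == 1%g)%:R.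
Proof. by rewrite ffunE. Qed.

Lemma galg_mulE f g x : (f * g) x = \sum_y f y * g (y^-1 * x)%g.
Proof. by rewrite ffunE. Qed.

Lemma galg_deltaE a x : galg_delta R a x = (x == a)%:R.
Proof. by rewrite ffunE. Qed.

Lemma galg_delta1 : galg_delta R (1%g : gT) = 1.
Proof. by apply/ffunP => x; rewrite !ffunE. Qed.

Lemma galg_mul_deltaE a f x : (galg_delta R a * f) x = f (a^-1 * x)%g.
Proof.
rewrite galg_mulE (bigD1 a) //= galg_deltaE eqxx mul1r big1 ?addr0 // => y /negPf ny.
by rewrite galg_deltaE ny mul0r.
Qed.

Lemma galg_deltaM a b : galg_delta R a * galg_delta R b = galg_delta R (a * b).
Proof.
apply/ffunP => x; rewrite galg_mul_deltaE !galg_deltaE.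
by rewrite -(inj_eq (mulgI a)) mulKVg.
Qed.

Variable H : {group gT}.

Lemma galg_resE f x : galg_res H f x = if x \in H then f x else 0.
Proof. by rewrite ffunE. Qed.

Lemma galg_res_is_zmod : zmod_morphism (galg_res (R := R) H).
Proof.
move=> f g; apply/ffunP => x.
by rewrite !(galg_resE, galg_addE, galg_oppE); case: ifP; rewrite ?subr0.
Qed.
HB.instance Definition _ := GRing.isZmodMorphism.Build _ _ (galg_res (R := R) H)
  galg_res_is_zmod.

Lemma galg_res_delta a : galg_res H (galg_delta R a) = if a \in H then galg_delta R a else 0.
Proof.
apply/ffunP => x; rewrite galg_resE.
case: ifP => xH; case: ifP => aH; rewrite ?ffunE //; case: eqP => // xa.
  by rewrite -xa xH in aH.
by rewrite xa aH in xH.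
Qed.

Lemma galg_res_mull f g : galg_res H (galg_res H f * g) = galg_res H f * galg_res H g.
Proof.
apply/ffunP => x; rewrite galg_resE !galg_mulE.
case: ifP => xH.
  apply: eq_bigr => y _; rewrite !galg_resE; case: ifP => yH; rewrite ?mul0r //.
  by rewrite groupM ?groupV ?xH.
rewrite big1 // => y _; rewrite !galg_resE; case: ifP => yH; rewrite ?mul0r //.
by case: ifP => yxH; rewrite ?mulr0 //; move: xH; rewrite -(mulKVg y x) groupM.
Qed.

End GroupAlgebra.

Section GroupAlgebraMap.
Variables (R S : nzRingType) (gT : finGroupType) (f : {rmorphism R -> S}).

Lemma galg_map_is_zmod : zmod_morphism (galg_map (gT := gT) f).
Proof. by move=> p q; apply/ffunP => x; rewrite !(ffunE, galg_addE, galg_oppE) rmorphB. Qed.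
HB.instance Definition _ :=
  GRing.isZmodMorphism.Build _ _ (galg_map (gT := gT) f) galg_map_is_zmod.

Lemma galg_map_is_monoid : monoid_morphism (galg_map (gT := gT) f).
Proof.
split=> [|p q]; apply/ffunP => x; rewrite ffunE ?galg_1E ?rmorph_nat //.
by rewrite !galg_mulE rmorph_sum; apply: eq_bigr => y _; rewrite rmorphM !ffunE.
Qed.
HB.instance Definition _ :=
  GRing.isMonoidMorphism.Build _ _ (galg_map (gT := gT) f) galg_map_is_monoid.

End GroupAlgebraMap.

Lemma abelian_mulgC (gT : finGroupType) :
  abelian [set: gT] -> forall x y : gT, (x * y = y * x)%g.
Proof. by move=> Hab x y; apply/(centsP Hab); rewrite inE. Qed.

Definition cgalg (R : comNzRingType) (gT : finGroupType) of abelian [set: gT] := galg R gT.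
HB.instance Definition _ R gT Hab := GRing.NzRing.on (@cgalg R gT Hab).

Lemma cgalg_mulC R gT Hab : commutative (@GRing.mul (@cgalg R gT Hab)).
Proof.
move=> p q; apply/ffunP => x; rewrite !galg_mulE.
rewrite (reindex_inj (inj_comp (mulgI x) (@invg_inj gT))) /=.
apply: eq_bigr => z _; rewrite invMg invgK mulgKV mulrC.
by rewrite (abelian_mulgC Hab x).
Qed.
HB.instance Definition _ R gT Hab :=
  GRing.PzRing_hasCommutativeMul.Build (@cgalg R gT Hab) (@cgalg_mulC R gT Hab).

Section CosetReps.
Variables (gT : finGroupType) (H : {group gT}).
Local Open Scope group_scope.
Local Notation m := #|coset_reps H|.

Lemma mem_coset_rep g : coset_rep H g \in g *: H.
Proof. by rewrite /coset_rep; case: pickP => [//|/(_ g)]; rewrite lcoset_refl. Qed.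

Lemma coset_rep_lcoset g g' : g' \in g *: H -> coset_rep H g' = coset_rep H g.
Proof.
move/lcoset_eqP => eqgH.
have eqP_gH : [pred x in g' *: H] =1 [pred x in g *: H] by move=> x; rewrite /= eqgH.
by rewrite /coset_rep (eq_pick eqP_gH); case: pickP => [//|/(_ g)]; rewrite /= lcoset_refl.
Qed.

Lemma coset_rep_in_reps g : coset_rep H g \in coset_reps H.
Proof. exact: imset_f. Qed.

Definition crep (s : 'I_m) : gT := enum_val s.
Definition coset_index g : 'I_m := enum_rank_in (coset_rep_in_reps g) (coset_rep H g).

Lemma crep_coset_index g : crep (coset_index g) = coset_rep H g.
Proof. by rewrite /crep enum_rankK_in ?coset_rep_in_reps. Qed.

Lemma mem_crep_lcoset s g : (crep s \in g *: H) = (s == coset_index g).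
Proof.
apply/idP/eqP => [sgH|->]; last by rewrite crep_coset_index mem_coset_rep.
suff : crep s = crep (coset_index g) by apply: enum_val_inj.
move: sgH; rewrite crep_coset_index.
have /imsetP[x _ ->] : crep s \in coset_reps H by apply: enum_valP.
move=> xgH; apply: coset_rep_lcoset.
by rewrite -(lcoset_eqP xgH) (lcoset_eqP (mem_coset_rep x)) lcoset_refl.
Qed.

Lemma crepK s : coset_index (crep s) = s.
Proof. by apply/esym/eqP; rewrite -mem_crep_lcoset lcoset_refl. Qed.

Lemma mem_crep_crep s s' : (crep s \in crep s' *: H) = (s == s').
Proof. by rewrite mem_crep_lcoset crepK. Qed.

End CosetReps.

Lemma lreg_coef0 (R : nzRingType) (p : {poly R}) : p`_0 = 1 -> GRing.lreg p.
Proof.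
move=> p0_1; apply/mulrI0_lreg => q /polyP pq0; apply/polyP => i; rewrite coef0.
elim: i {-2}i (leqnn i) => [|i IHi] j; first by rewrite leqn0 => /eqP->;
  have := pq0 0; rewrite coefM big_ord1 p0_1 mul1r coef0.
move=> le_j_i1; have := pq0 j; rewrite coefM big_ord_recl p0_1 mul1r subn0 coef0.
by rewrite big1 ?addr0 // => k _; rewrite IHi ?mulr0 // lift0; lia.
Qed.

Definition coef0_poly (R : comNzRingType) : {rmorphism {poly R} -> {poly R}} :=
  (polyC \o horner_eval 0)%FUN.

Lemma coef0_polyE (R : comNzRingType) (p : {poly R}) : coef0_poly R p = (p`_0)%:P.
Proof. by rewrite /= /horner_eval horner_coef0. Qed.

Lemma coef0_poly_lreg (R : comNzRingType) (p : {poly R}) :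
  coef0_poly R p = 1 -> GRing.lreg p.
Proof. by rewrite coef0_polyE => /polyC_inj; apply: lreg_coef0. Qed.

Section CosetMatrix.
Variables (F : comNzRingType) (gT : finGroupType) (Hab : abelian [set: gT]).
Variable H : {group gT}.
Local Notation R := (cgalg F Hab).
Local Notation m := #|coset_reps H|.

Definition cdelta (a : gT) : R := galg_delta F a.
Definition cres (p : R) : R := galg_res H p.
HB.instance Definition _ := GRing.isZmodMorphism.Build R R cres (galg_res_is_zmod H).

Lemma cdeltaM a b : cdelta a * cdelta b = cdelta (a * b).
Proof. exact: galg_deltaM. Qed.

Lemma cdelta1 : cdelta 1 = 1.
Proof. exact: galg_delta1. Qed.

Lemma cres_mull p q : cres (cres p * q) = cres p * cres q.
Proof. exact: galg_res_mull. Qed.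

Lemma cres_delta a : cres (cdelta a) = if a \in H then cdelta a else 0.
Proof. exact: galg_res_delta. Qed.

Lemma cresE p x : cres p x = if x \in H then p x else 0.
Proof. exact: galg_resE. Qed.

Lemma cdelta_mulE a p x : (cdelta a * p) x = p (a^-1 * x)%g.
Proof. exact: galg_mul_deltaE. Qed.

Lemma mem_crep_mul s x : (crep s * x \in H)%g = (s == coset_index H x^-1).
Proof.
by rewrite -mem_crep_lcoset mem_lcoset invgK (abelian_mulgC Hab).
Qed.

Lemma coset_decomp p : \sum_(s < m) cdelta (crep s)^-1 * cres (cdelta (crep s) * p) = p.
Proof.
apply/ffunP => x; rewrite galg_sumE (bigD1 (coset_index H x^-1)) //= big1 ?addr0 => [|s ns];
  by rewrite cdelta_mulE invgK cresE cdelta_mulE mulKg mem_crep_mul ?eqxx ?(negPf ns).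
Qed.

Definition pres (P : {poly R}) : {poly R} := map_poly cres P.
HB.instance Definition _ := GRing.Additive.copy pres (map_poly cres).

Lemma pres_mull P Q : pres (pres P * Q) = pres P * pres Q.
Proof.
apply/polyP => i; rewrite !coef_map !coefM raddf_sum; apply: eq_bigr => j _.
by rewrite !coef_map; apply: cres_mull.
Qed.

Lemma poly_coset_decomp P :
  \sum_(s < m) (cdelta (crep s)^-1)%:P * pres ((cdelta (crep s))%:P * P) = P.
Proof.
apply/polyP => i; rewrite coef_sum -[RHS]coset_decomp.
by apply: eq_bigr => s _; rewrite coefCM coef_map coefCM.
Qed.

Definition coset_mx (P : {poly R}) : 'M[{poly R}]_m :=
  \matrix_(k, l) pres ((cdelta ((crep k)^-1 * crep l))%:P * P).

Lemma coset_mxD : {morph coset_mx : P Q / P + Q}.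
Proof. by move=> P Q; apply/matrixP => k l; rewrite !mxE mulrDr raddfD. Qed.

Lemma coset_mx1 : coset_mx 1 = 1%:M.
Proof.
apply/matrixP => k l; rewrite !mxE mulr1 /pres map_polyC /= cres_delta -mem_lcoset mem_crep_crep.
by rewrite eq_sym; case: eqP => [->|//]; rewrite mulVg cdelta1.
Qed.

Lemma coset_mxM : {morph coset_mx : P Q / P * Q >-> P *m Q}.
Proof.
move=> P Q; apply/matrixP => k l; rewrite !mxE.
pose P' := (cdelta (crep k)^-1)%:P * P.
have -> : (cdelta ((crep k)^-1 * crep l))%:P * (P * Q) = P' * ((cdelta (crep l))%:P * Q).
  by rewrite /P' -cdeltaM polyCM; ring.
rewrite -(poly_coset_decomp P') mulr_suml raddf_sum; apply: eq_bigr => s _ /=.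
rewrite -mulrA mulrCA pres_mull !mxE /P'.
by congr (pres _ * pres _); rewrite -cdeltaM polyCM; ring.
Qed.

Lemma norm_mxE (P : {poly R}) :
  norm_mx (R := F) H (P : {poly galg F gT}) = coset_mx P :> 'M[{poly R}]_m.
Proof.
apply/matrixP => k l; rewrite !mxE; apply/polyP => i.
rewrite coef_map_id0 ?coef_map ?coefCM; last by rewrite mulr0 mul0r raddf0.
by rewrite -cdeltaM mulrAC.
Qed.

Lemma map_coset_mx_coef0 P : map_mx (coef0_poly R) (coset_mx P) = coset_mx (coef0_poly R P).
Proof.
by apply/matrixP => k l; rewrite !mxE !coef0_polyE coef_map coefCM -map_polyC polyCM.
Qed.

Lemma pres_CX c : pres (c%:P * 'X) = (cres c)%:P * 'X.
Proof.
apply/polyP => i; rewrite coef_map !coefMX.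
by case: eqP => _; rewrite ?raddf0 // !coefC; case: eqP; rewrite ?raddf0.
Qed.

Lemma coset_mx_linear x y k l :
  coset_mx (x%:P - y%:P * 'X) k l =
  (cres (cdelta ((crep k)^-1 * crep l) * x))%:P
    - (cres (cdelta ((crep k)^-1 * crep l) * y))%:P * 'X.
Proof. by rewrite mxE mulrBr mulrA -!polyCM raddfB /= pres_CX /pres map_polyC. Qed.

Lemma cdelta_conj_cresE a b c p z : a \in H -> c \in H ->
  (cdelta a^-1 * cres (cdelta b * p) * cdelta c) z
  = if z \in H then p (b^-1 * (a * z * c^-1))%g else 0.
Proof.
move=> aH cH; rewrite mulrAC cdeltaM cdelta_mulE invMg invgK cresE cdelta_mulE.
rewrite -mulgA (abelian_mulgC Hab c^-1).
by rewrite groupMr ?groupV // groupMl.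
Qed.

End CosetMatrix.

Section OrbitReps.
Variables (gT : finGroupType) (V : finType) (toV : {action gT &-> V}).
Hypothesis toV_free : forall v g, toV v g = v -> g = 1%g.
Local Open Scope group_scope.

Lemma mem_orbit_rep (K : {group gT}) v : orbit_rep toV K v \in orbit toV K v.
Proof. by rewrite /orbit_rep; case: pickP => [//|/(_ v)]; rewrite orbit_refl. Qed.

Lemma orbit_rep_orbit (K : {group gT}) v w :
  w \in orbit toV K v -> orbit_rep toV K w = orbit_rep toV K v.
Proof.
move/orbit_eqP => eq_vw.
have eqP_vw : [pred x in orbit toV K w] =1 [pred x in orbit toV K v].
  by move=> x; rewrite /= eq_vw.
by rewrite /orbit_rep (eq_pick eqP_vw); case: pickP => [//|/(_ v)]; rewrite /= orbit_refl.
Qed.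

Lemma orbit_repK (K : {group gT}) r : r \in orbit_reps toV K -> orbit_rep toV K r = r.
Proof. by case/imsetP => v _ ->; apply/orbit_rep_orbit/mem_orbit_rep. Qed.

Lemma orbit_rep_in_reps (K : {set gT}) v : orbit_rep toV K v \in orbit_reps toV K.
Proof. exact: imset_f. Qed.

Lemma act_free_inj v : injective (toV v).
Proof.
move=> a b eq_ab; apply/eqP; rewrite eq_mulgV1; apply/eqP/(toV_free (v := v)).
by rewrite actM eq_ab -actM mulgV act1.
Qed.

Variable H : {group gT}.
Local Notation n := #|orbit_reps toV [set: gT]|.
Local Notation N := #|orbit_reps toV H|.
Local Notation m := #|coset_reps H|.

Definition orbit_shift v : gT := odflt 1 [pick h in H | toV v h == orbit_rep toV H v].

Lemma orbit_shiftP v : orbit_shift v \in H /\ toV v (orbit_shift v) = orbit_rep toV H v.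
Proof.
rewrite /orbit_shift; case: pickP => [h /andP[hH /eqP //]|].
by have /orbitP[h hH eq_h] := mem_orbit_rep H v; move/(_ h); rewrite hH eq_h eqxx.
Qed.

Definition coset_vertex (j : 'I_n) (k : 'I_m) : V := toV (enum_val j) (crep k).

Definition coset_vertex_index j k : 'I_N :=
  enum_rank_in (orbit_rep_in_reps H (coset_vertex j k)) (orbit_rep toV H (coset_vertex j k)).

Lemma enum_val_coset_vertex_index j k :
  enum_val (coset_vertex_index j k) = orbit_rep toV H (coset_vertex j k).
Proof. by rewrite enum_rankK_in ?orbit_rep_in_reps. Qed.

Lemma coset_vertex_index_inj j k j' k' :
  coset_vertex_index j k = coset_vertex_index j' k' -> j = j' /\ k = k'.
Proof.
move/(congr1 enum_val); rewrite !enum_val_coset_vertex_index.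
case: (orbit_shiftP (coset_vertex j k)) (orbit_shiftP (coset_vertex j' k')).
rewrite /coset_vertex; set h := orbit_shift _; set h' := orbit_shift _.
move=> hH <- [h'H <-]; rewrite -!actM => eq_vv'.
have eq_jj' : j = j'.
  have [rj rj'] := (enum_valP j, enum_valP j'); apply: enum_val_inj.
  rewrite -(orbit_repK rj) -(orbit_repK rj'); apply/orbit_rep_orbit/orbitP.
  by exists ((crep k' * h') * (crep k * h)^-1); rewrite ?inE // actM -eq_vv' -actM mulgV act1.
move: eq_vv'; rewrite -eq_jj' => /act_free_inj eq_kh.
split=> //; apply/eqP; rewrite -mem_crep_crep; apply/lcosetP.
by exists (h' * h^-1); rewrite ?groupM ?groupV // mulgA -eq_kh mulgK.
Qed.

Lemma coset_vertex_index_surj s : exists j k, coset_vertex_index j k = s.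
Proof.
have rs := enum_valP s; set v := enum_val s in rs.
have rv := orbit_rep_in_reps [set: gT] v.
exists (enum_rank_in rv (orbit_rep toV [set: gT] v)).
have /orbitP[g _ eq_g] : v \in orbit toV [set: gT] (orbit_rep toV [set: gT] v).
  by rewrite orbit_sym mem_orbit_rep.
exists (coset_index H g); apply: enum_val_inj.
rewrite enum_val_coset_vertex_index -[RHS](orbit_repK rs); apply: orbit_rep_orbit.
rewrite /coset_vertex enum_rankK_in //.
have /lcosetP[h hH ->] : crep (coset_index H g) \in g *: H by rewrite mem_crep_lcoset.
by rewrite actM eq_g mem_orbit.
Qed.

Definition coset_vertex_index_pair (x : 'I_(n * m)) : 'I_N :=
  coset_vertex_index (ord_fst x) (ord_snd x).

Lemma coset_vertex_index_pair_inj : injective coset_vertex_index_pair.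
Proof.
move=> x y /coset_vertex_index_inj[eq_fst eq_snd].
by rewrite -(pair_ord_fst_snd x) -(pair_ord_fst_snd y) eq_fst eq_snd.
Qed.

Lemma card_coset_vertices : (n * m)%N = N.
Proof.
have surj : [set: 'I_N] = coset_vertex_index_pair @: [set: 'I_(n * m)].
  apply/setP => s; rewrite inE; apply/esym/imsetP.
  have [j [k <-]] := coset_vertex_index_surj s.
  by exists (pair_ord j k); rewrite // /coset_vertex_index_pair ord_fst_pair ord_snd_pair.
have := card_imset [set: 'I_(n * m)] coset_vertex_index_pair_inj.
by rewrite -surj !cardsT !card_ord.
Qed.

End OrbitReps.

Section Gamma.
Variables (gT : finGroupType) (V E : finType) (o t : E -> V).
Variables (toV : {action gT &-> V}) (toE : {action gT &-> E}).
Hypothesis Habel : abelian [set: gT].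
Hypothesis Ho : forall e g, o (toE e g) = toV (o e) g.
Hypothesis Ht : forall e g, t (toE e g) = toV (t e) g.
Hypothesis toV_free : forall v g, toV v g = v -> g = 1%g.
Variables (H : {group gT}) (F : comNzRingType).
Local Notation R := (cgalg F Habel).
Local Notation G := [set: gT].
Local Notation n := #|orbit_reps toV G|.
Local Notation m := #|coset_reps H|.

Lemma card_edges_act a b g1 g2 :
  #|[set e | (o e == toV a g1) && (t e == toV b g2)]| =
  #|[set e | (o e == a) && (t e == toV b (g2 * g1^-1)%g)]|.
Proof.
rewrite -[RHS](card_imset _ (act_inj toE g1)); apply: eq_card => e.
rewrite inE; apply/idP/imsetP => [/andP[/eqP oe /eqP te]|[e' + ->]].
  exists (toE e g1^-1%g); last by rewrite -actM mulVg act1.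
  by rewrite inE Ho Ht oe te -!actM mulgV act1 !eqxx.
by rewrite inE Ho Ht => /andP[/eqP-> /eqP->]; rewrite -actM mulgKV !eqxx.
Qed.

Definition gamma_mx (K : {set gT}) : 'M[{poly R}]_#|orbit_reps toV K| :=
  \matrix_(i, j) ((i == j)%:R%:P - (adj_galg o t toV F K i j : R)%:P * 'X).

Lemma map_gamma (K : {set gT}) :
  map_poly (galg_map (intr : int -> F)) (gamma o t toV int K) = \det (gamma_mx K) :> {poly R}.
Proof.
rewrite -det_map_mx; congr (\det _); apply/matrixP => i j.
rewrite !mxE rmorphB rmorphM /= !map_polyC map_polyX /= rmorph_nat.
by congr (_ - (_ : R)%:P * 'X); apply/ffunP => g; rewrite !ffunE rmorph_nat.
Qed.

Lemma gamma_mx_coef0 (K : {set gT}) : map_mx (coef0_poly R) (gamma_mx K) = 1%:M.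
Proof.
apply/matrixP => i j; rewrite !mxE coef0_polyE coefB coefC coefMX subr0.
by case: eqP.
Qed.

Local Notation delta := (cdelta F Habel).
Local Notation adj K := (adj_galg o t toV F K).
Local Notation shift j k := (orbit_shift toV H (coset_vertex j k)).
Local Notation vindex := (@coset_vertex_index _ _ toV H).

Lemma gamma_mx_diag_entry j1 k j2 l :
  delta (shift j1 k)^-1 * cres H (delta ((crep k)^-1 * crep l) * (j1 == j2)%:R)
    * delta (shift j2 l)
  = (vindex j1 k == vindex j2 l)%:R.
Proof.
have [eq_idx|neq_idx] := eqVneq (vindex j1 k) (vindex j2 l).
  have [<- <-] := coset_vertex_index_inj toV_free eq_idx.
  have cres1 : cres H (1 : R) = 1 by rewrite -cdelta1 cres_delta group1.
  by rewrite mulVg cdelta1 !eqxx !mulr1 cres1 mulr1 cdeltaM mulVg cdelta1.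
move: neq_idx; have [<- neq_idx|_ _] := eqVneq j1 j2; last by rewrite mulr0 raddf0 mulr0 mul0r.
rewrite mulr1 cres_delta -mem_lcoset mem_crep_crep.
by case: eqVneq => [eq_lk|]; [rewrite eq_lk eqxx in neq_idx | rewrite mulr0 mul0r].
Qed.

Lemma gamma_mx_adj_entry j1 k j2 l :
  delta (shift j1 k)^-1 * cres H (delta ((crep k)^-1 * crep l) * adj G j1 j2)
  * delta (shift j2 l)
  = adj H (vindex j1 k) (vindex j2 l).
Proof.
case: (orbit_shiftP toV H (coset_vertex j1 k)) (orbit_shiftP toV H (coset_vertex j2 l)).
move=> h1H eq_h1 [h2H eq_h2]; apply/ffunP => z.
rewrite cdelta_conj_cresE // !mxE !ffunE !enum_val_coset_vertex_index -eq_h1 -eq_h2.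
case: (z \in H); rewrite ?muln0 // inE !muln1 /coset_vertex -!actM card_edges_act.
have shift_eq (a b c d : gT) : ((a^-1 * b)^-1 * (c * z * d^-1) = a * (c * z) * (b * d)^-1)%g.
  by rewrite !invMg !invgK !mulgA [RHS](abelian_mulgC Habel) !mulgA.
by rewrite shift_eq.
Qed.

Lemma gamma_mx_entry j1 k j2 l :
  gamma_mx H (vindex j1 k) (vindex j2 l) =
  (delta (shift j1 k)^-1)%:P * coset_mx H (gamma_mx G j1 j2) k l
    * (delta (shift j2 l))%:P.
Proof.
have conjCX (a b x y : R) :
    a%:P * (x%:P - y%:P * 'X) * b%:P = (a * x * b)%:P - (a * y * b)%:P * 'X.
  by rewrite !polyCM; ring.
rewrite [gamma_mx G j1 j2]mxE coset_mx_linear conjCX mxE.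
by rewrite gamma_mx_diag_entry gamma_mx_adj_entry.
Qed.

Local Notation shift_pair x := (shift (ord_fst x) (ord_snd x)).

Lemma gamma_mx_coset_vertices :
  \matrix_(x, y) gamma_mx H (coset_vertex_index_pair x) (coset_vertex_index_pair y) =
  \matrix_(x, y) ((delta (shift_pair x)^-1)%:P
                   * expand_mx (coset_mx H) (gamma_mx G) x y
                   * (delta (shift_pair y))%:P).
Proof. by apply/matrixP => x y; rewrite mxE gamma_mx_entry [RHS]mxE [in RHS]mxE. Qed.

Lemma det_gamma_mx : \det (gamma_mx H) = \det (coset_mx H (\det (gamma_mx G))).
Proof.
rewrite -(det_expand_mx (coset_mxD H) (coset_mxM H) (coset_mx1 F Habel H)
  (@coef0_poly_lreg _) (map_coset_mx_coef0 H) (gamma_mx_coef0 G)).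
rewrite -(det_reindex (coset_vertex_index_pair_inj toV_free (H := H))
  (card_coset_vertices toV_free H)).
rewrite gamma_mx_coset_vertices det_scale_row_col -big_split big1 ?mul1r // => x _.
by rewrite /= -polyCM cdeltaM mulVg cdelta1.
Qed.

End Gamma.

Theorem theorem3p5
  (gT : finGroupType) (V E : finType) (o t : E -> V)
  (toV : {action gT &-> V}) (toE : {action gT &-> E})
  (Habel : abelian [set: gT])
  (Hsc : strongly_connected o t)
  (Ho : forall e g, o (toE e g) = toV (o e) g)
  (Ht : forall e g, t (toE e g) = toV (t e) g)
  (Hfree : forall v g, toV v g = v -> g = 1%g)
  (H : {group gT})
  (F : closedFieldType) (HF : [pchar F] =i pred0) :
  let intF := fun z : int => (z%:~R : F) in
  NGamma H (map_poly (galg_map intF) (gamma o t toV int [set: gT]))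
  = map_poly (galg_map intF) (gamma o t toV int H).
Proof.
rewrite /NGamma !(map_gamma o t toV Habel) norm_mxE.
by rewrite (det_gamma_mx Habel Ho Ht Hfree).
Qed.
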